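(* Let $1\le r\le s\le t$ and let $u=ABCd$, $v=A'B'C'd'$ be vertices of $E3C(r,s,t)$ with $A\ne A'$, $B\ne B'$, $C=C'$ and $d\ne d'$. Then there exist $2r+2$ pairwise internally disjoint $u$–$v$ paths in $E3C(r,s,t)$, each of length at most $r+s+7$.
   Context: The exchanged 3-ary $n$-cube $E3C(r,s,t)$ ($r,s,t\ge1$, $n=r+s+t+1$): vertices are strings written $x=ABCd$ with $A\in\{0,1,2\}^r$, $B\in\{0,1,2\}^s$, $C\in\{0,1,2\}^t$, $d\in\{0,1,2\}$. Two distinct vertices $x=ABCd$, $y=A'B'C'd'$ are adjacent iff one of: (E0) $A=A',B=B',C=C'$ and $d\ne d'$; (E1) $d=d'=0$, $A=A'$, $B=B'$ and $C,C'$ differ in exactly one position; (E2) $d=d'=1$, $A=A'$, $C=C'$ and $B,B'$ differ in exactly one position; (E3) $d=d'=2$, $B=B'$, $C=C'$ and $A,A'$ differ in exactly one position. Paths are internally disjoint if they share no vertices other than their endpoints; length = number of edges. *)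

From mathcomp Require Import all_boot.
Set Implicit Arguments. Unset Strict Implicit. Unset Printing Implicit Defensive.

Definition word (n : nat) := {ffun 'I_n -> 'I_3}.

Definition vtx (r s t : nat) : finType := (word r * word s * word t * 'I_3)%type.

Definition vA r s t (x : vtx r s t) : word r := x.1.1.1.
Definition vB r s t (x : vtx r s t) : word s := x.1.1.2.
Definition vC r s t (x : vtx r s t) : word t := x.1.2.
Definition vd r s t (x : vtx r s t) : 'I_3 := x.2.

Definition diff1 n (a b : word n) : bool := #|[set i | a i != b i]| == 1.

Definition e3c_adj r s t : rel (vtx r s t) := fun x y =>
  (x != y) &&
  [|| [&& vA x == vA y, vB x == vB y, vC x == vC y & vd x != vd y],
      [&& (vd x == 0 :> nat), (vd y == 0 :> nat), vA x == vA y, vB x == vB y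
          & diff1 (vC x) (vC y)],
      [&& (vd x == 1 :> nat), (vd y == 1 :> nat), vA x == vA y, vC x == vC y
          & diff1 (vB x) (vB y)]
    | [&& (vd x == 2 :> nat), (vd y == 2 :> nat), vB x == vB y, vC x == vC y
          & diff1 (vA x) (vA y)]].

Definition is_path (T : eqType) (e : rel T) (u v : T) (p : seq T) : bool :=
  [&& p != [::], head u p == u, last u p == v, path e u (behead p) & uniq p].

Definition path_len (T : Type) (p : seq T) : nat := (size p).-1.

Definition int_disjoint (T : eqType) (u v : T) (p q : seq T) : Prop :=
  forall x, x \in p -> x \in q -> x = u \/ x = v.

From mathcomp Require Import all_boot zify.
Set Implicit Arguments. Unset Strict Implicit. Unset Printing Implicit Defensive.

(* Reversing all paths, and exchanging the blocks A and B (an isomorphism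
   E3C(s,r,t) -> E3C(r,s,t) that swaps the last symbols 1 and 2), reduce the
   theorem to d = 0, d' = 2 and to d = 1, d' = 2.  Two of the walks change A
   and B coordinate by coordinate inside the layers d = 2 and d = 1 (one of
   them after a detour through a neighbour of C when d = 1).  Each of the
   other 2r walks first steps to one of the 2r neighbours of u that differ
   from it in one coordinate of C (when d = 0) or of B (when d = 1), then
   crosses over in the same way and comes back.  Every internal vertex
   determines the walk it lies on, so the walks are internally disjoint, and
   removing loops turns them into paths without making them longer. *)

Section DisjointPaths.
Variables (T : eqType) (e : rel T).

Definition disjoint_paths (u v : T) (k n : nat) : Prop :=
  exists P : 'I_k -> seq T,
    (forall i, is_path e u v (P i)) /\ (forall i, path_len (P i) <= n) /\
    (forall i j, i != j -> int_disjoint u v (P i) (P j)).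

Definition refl_closure : rel T := fun x y => (x == y) || e x y.

Lemma path_refl_closure_uniq x p :
  path refl_closure x p -> uniq (x :: p) -> path e x p.
Proof.
elim: p x => //= y p IHp x /andP[/orP[/eqP xy | exy] pyp] /andP[xNp up].
  by move: xNp; rewrite xy mem_head.
by rewrite exy IHp.
Qed.

Lemma disjoint_paths_of_walks u v k n (W : nat -> seq T) (lab : T -> nat) :
  (forall i, i < k -> path refl_closure u (W i) /\ last u (W i) = v) ->
  (forall i, i < k -> size (W i) <= n) ->
  (forall i x, i < k -> x \in W i -> x != u -> x != v -> lab x = i) ->
  disjoint_paths u v k n.
Proof.
move=> walkW sizeW labW; exists (fun i => u :: shorten u (W i)).
split; [|split] => [i|i|i j ij x].
- have [pW <-] := walkW i (ltn_ord i); case: (shortenP pW) => p pp up _.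
  by rewrite /is_path /= !eqxx path_refl_closure_uniq.
- have [pW _] := walkW i (ltn_ord i); case: (shortenP pW) => p _ up sub.
  apply: leq_trans (sizeW i (ltn_ord i)); apply: uniq_leq_size sub.
  by case/andP: up.
- have shortW (m : 'I_k) y : y \in shorten u (W m) -> y \in W m.
    by have [pW _] := walkW m (ltn_ord m); case: (shortenP pW) => p _ _; apply.
  rewrite !inE => /orP[/eqP-> _|/shortW xi]; first by left.
  case/orP=> [/eqP->|/shortW xj]; first by left.
  have [->|xu] := eqVneq x u; first by left.
  have [->|xv] := eqVneq x v; first by right.
  move: ij; rewrite -val_eqE /= -(labW _ _ (ltn_ord i) xi xu xv).
  by rewrite (labW _ _ (ltn_ord j) xj xu xv) eqxx.
Qed.

Lemma is_path_rev u v p : symmetric e -> is_path e u v p -> is_path e v u (rev p).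
Proof.
move=> sym_e; case: p => // x q /and5P[_ /= /eqP-> /eqP lastq pq uq].
rewrite /is_path rev_uniq lastI rev_rcons /= -lastI (uq : uniq (u :: q)) andbT.
rewrite -lastq eqxx rev_path.
have -> : last (last u q) (rev (belast u q)) = u.
  by case: q {lastq pq uq} => //= y q; rewrite rev_cons last_rcons.
by rewrite eqxx; apply: sub_path pq => y z; rewrite sym_e.
Qed.

Lemma disjoint_paths_rev u v k n :
  symmetric e -> disjoint_paths u v k n -> disjoint_paths v u k n.
Proof.
move=> sym_e [P [pathP [lenP disjP]]]; exists (fun i => rev (P i)).
split; [|split] => [i|i|i j ij x].
- exact: is_path_rev.
- by rewrite /path_len size_rev; apply: lenP.
- by rewrite !mem_rev => xi xj; case: (disjP i j ij x xi xj); [right|left].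
Qed.

End DisjointPaths.

Lemma disjoint_paths_map (T T' : eqType) (e : rel T) (e' : rel T') (f : T -> T')
    u v k n :
  injective f -> {homo f : x y / e x y >-> e' x y} ->
  disjoint_paths e u v k n -> disjoint_paths e' (f u) (f v) k n.
Proof.
move=> inj_f homo_f [P [pathP [lenP disjP]]]; exists (fun i => map f (P i)).
split; [|split] => [i|i|i j ij _ /mapP[x xi ->] /mapP[y yj /inj_f xy]].
- case: (P i) (pathP i) => // x q /and5P[_ /= /eqP-> /eqP lastq pq uq].
  rewrite /is_path /= eqxx last_map lastq eqxx (homo_path homo_f pq).
  by rewrite (mem_map inj_f) (map_inj_uniq inj_f).
- by rewrite /path_len size_map; apply: lenP.
- by move: yj; rewrite -xy => xj; case: (disjP i j ij x xi xj) => ->; [left|right].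
Qed.

Lemma half_lt_double i m : i < 2 * m -> i./2 < m.
Proof. by rewrite ltn_half_double mul2n. Qed.

Lemma index_mkseq (T : eqType) (f : nat -> T) N i :
  uniq (mkseq f N) -> i < N -> index (f i) (mkseq f N) = i.
Proof. by move=> uf lt_i; rewrite -{1}(nth_mkseq (f 0) f lt_i) index_uniq ?size_mkseq. Qed.

Lemma mkseq_index (T : eqType) (f : nat -> T) N y :
  index y (mkseq f N) < N -> f (index y (mkseq f N)) = y.
Proof.
move=> lt_y; have y_in : y \in mkseq f N by rewrite -index_mem size_mkseq.
by rewrite -[RHS](nth_index (f 0) y_in) nth_mkseq.
Qed.

Definition nswap (a b i : nat) : nat := if i == a then b else if i == b then a else i.

Lemma nswapK a b : involutive (nswap a b).
Proof.
move=> i; rewrite /nswap.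
have [->|ia] := eqVneq i a; first by rewrite eqxx; case: eqVneq.
have [->|ib] := eqVneq i b; first by rewrite eqxx.
by rewrite (negbTE ia) (negbTE ib).
Qed.

Lemma nswap_lt N a b i : a < N -> b < N -> i < N -> nswap a b i < N.
Proof. by rewrite /nswap; do 2?case: ifP. Qed.

Section Words.
Variable n : nat.
Implicit Types (W X Y : word n) (q : 'I_n) (ps : seq 'I_n).

Definition wstep W W' := #|[set q | W q != W' q]| <= 1.

Definition agree_at (k : nat) W W' := [forall q, (val q == k) ==> (W q == W' q)].

Lemma wstep_sym W W' : wstep W W' = wstep W' W.
Proof. by rewrite /wstep; congr (_ <= 1); apply: eq_card => q; rewrite !inE eq_sym. Qed.

Lemma wstep_at k W W' : (forall q, val q != k -> W q = W' q) -> wstep W W'.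
Proof.
move=> agr; apply/card_le1_eqP => q q'; rewrite !inE => Wq Wq'; apply: val_inj.
have val_k q1 : W q1 != W' q1 -> val q1 = k by apply: contraNeq => /agr ->.
by rewrite /= (val_k _ Wq) (val_k _ Wq').
Qed.

Lemma wstep_diff1 W W' : wstep W W' -> W != W' -> diff1 W W'.
Proof.
move=> stepW neqW; rewrite /diff1 eqn_leq -/(wstep W W') stepW card_gt0.
apply: contraNneq neqW => noDiff; apply/eqP/ffunP => q; apply/eqP.
by have /setP/(_ q) := noDiff; rewrite !inE => /negbFE.
Qed.

Definition upd W q (x : 'I_3) : word n := [ffun q' => if q' == q then x else W q'].

Lemma wstep_upd W q x : wstep W (upd W q x).
Proof. by apply: (wstep_at (k := val q)) => q' q'q; rewrite ffunE -val_eqE (negbTE q'q). Qed.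

Definition shift (x : 'I_3) (b : bool) : 'I_3 := inord ((x + b.+1) %% 3).

Lemma shift_neq x b : shift x b != x.
Proof. by case: x => [[|[|[|m]]] ?] //; case: b; rewrite -val_eqE /= inordK. Qed.

Lemma shift_inj x b b' : shift x b = shift x b' -> b = b'.
Proof.
by case: x => [[|[|[|m]]] ?] //; case: b; case: b' => // /(congr1 val); rewrite /= !inordK.
Qed.

Definition nbr W (i : nat) : word n :=
  [ffun q => if val q == i./2 then shift (W q) (odd i) else W q].

Lemma nbr_at W i q : val q = i./2 -> nbr W i q = shift (W q) (odd i).
Proof. by move=> qi; rewrite ffunE qi eqxx. Qed.

Lemma nbr_off W i q : val q != i./2 -> nbr W i q = W q.
Proof. by move=> qi; rewrite ffunE (negbTE qi). Qed.

Lemma wstep_nbr W i : wstep W (nbr W i).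
Proof. by apply: (wstep_at (k := i./2)) => q /nbr_off ->. Qed.

Lemma nbr_agree_inj W i j : j./2 < n -> agree_at j./2 (nbr W i) (nbr W j) -> i = j.
Proof.
move=> lt_j /forallP/(_ (Ordinal lt_j)); rewrite /= eqxx => /eqP.
rewrite [RHS]nbr_at //; have [qi|qi] := eqVneq j./2 i./2.
  rewrite nbr_at // => /shift_inj oddij.
  by rewrite -(odd_double_half i) -(odd_double_half j) qi oddij.
by rewrite nbr_off // => eqW; have := shift_neq (W (Ordinal lt_j)) (odd j); rewrite -eqW eqxx.
Qed.

Lemma nbr_inj W i j : i./2 < n -> nbr W i = nbr W j -> i = j.
Proof.
move=> lt_i eqij; apply/esym/(@nbr_agree_inj W j i lt_i).
by rewrite -eqij; apply/forallP => q; rewrite eqxx implybT.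
Qed.

Lemma nbr_neq W i : i./2 < n -> nbr W i != W.
Proof.
move=> lt_i; apply/eqP => /ffunP/(_ (Ordinal lt_i))/eqP; rewrite nbr_at //.
exact/negP/shift_neq.
Qed.

Lemma uniq_nbrs W N : N <= 2 * n -> uniq (mkseq (nbr W) N).
Proof.
move=> leN; apply/mkseq_uniqP => i j lt_i _; apply: nbr_inj.
exact/half_lt_double/(leq_trans lt_i leN).
Qed.

Fixpoint wtraj X Y ps : seq (word n) :=
  if ps is q :: ps' then upd X q (Y q) :: wtraj (upd X q (Y q)) Y ps' else [::].

Definition wpath X Y ps := X :: wtraj X Y ps.

Lemma size_wpath X Y ps : size (wpath X Y ps) = (size ps).+1.
Proof. by elim: ps X => //= q ps IHps X; rewrite IHps. Qed.

Lemma last_wtraj_at X Y ps q :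
  last X (wtraj X Y ps) q = if q \in ps then Y q else X q.
Proof.
elim: ps X => //= q' ps IHps X; rewrite IHps inE ffunE.
by case: (eqVneq q q') => [->|] //=; case: ifP.
Qed.

Lemma last_wtraj X Y ps : (forall q, q \in ps) -> last X (wtraj X Y ps) = Y.
Proof. by move=> ps_full; apply/ffunP => q; rewrite last_wtraj_at ps_full. Qed.

Lemma mem_wpath X Y ps W : W \in wpath X Y ps ->
  exists m, forall q, W q = if q \in take m ps then Y q else X q.
Proof.
elim: ps X => [|q' ps IHps] X; first by rewrite inE => /eqP->; exists 0.
rewrite inE => /orP[/eqP->|/IHps[m Wm]]; first by exists 0.
exists m.+1 => q; rewrite Wm /= inE ffunE.
by case: (eqVneq q q') => [->|] //=; case: ifP.
Qed.

Section MapWpath.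
Variables (T : Type) (e : rel T) (f : word n -> T).
Hypothesis f_step : {homo f : W W' / wstep W W' >-> e W W'}.

Lemma path_map_wpath x X Y ps : e x (f X) -> path e x (map f (wpath X Y ps)).
Proof.
move=> exX; rewrite /= exX /=; elim: ps X {exX} => //= q ps IHps X.
by rewrite f_step ?wstep_upd ?IHps.
Qed.

End MapWpath.

Lemma last_map_wpath (T : Type) (f : word n -> T) x X Y ps :
  (forall q, q \in ps) -> last x (map f (wpath X Y ps)) = f Y.
Proof. by move=> ps_full; rewrite /= last_map last_wtraj. Qed.

Definition coords_first (k : nat) : seq 'I_n :=
  [seq q <- enum 'I_n | val q == k] ++ [seq q <- enum 'I_n | val q != k].

Definition coords_last (k : nat) : seq 'I_n :=
  [seq q <- enum 'I_n | val q != k] ++ [seq q <- enum 'I_n | val q == k].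

Lemma mem_coords_first k q : q \in coords_first k.
Proof. by rewrite mem_cat !(mem_filter _ _ (enum _)) mem_enum; case: eqP. Qed.

Lemma mem_coords_last k q : q \in coords_last k.
Proof. by rewrite mem_cat !(mem_filter _ _ (enum _)) mem_enum; case: eqP. Qed.

Lemma size_coords_first k : size (coords_first k) = n.
Proof.
by rewrite size_cat !size_filter (count_predC (fun q => val q == k)) size_enum_ord.
Qed.

Lemma size_coords_last k : size (coords_last k) = n.
Proof.
by rewrite size_cat addnC !size_filter (count_predC (fun q => val q == k)) size_enum_ord.
Qed.

Lemma filter_enum_val q : [seq q' <- enum 'I_n | val q' == val q] = [:: q].
Proof.
rewrite -(filter_pred1_uniq (enum_uniq 'I_n) (mem_enum _ q)).
by apply: eq_filter => q'; rewrite val_eqE.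
Qed.

Lemma mem_wpath_first X Y k W : k < n ->
  W \in wpath X Y (coords_first k) -> W = X \/ agree_at k W Y.
Proof.
move=> lt_k /mem_wpath[[|m] Wm].
  by left; apply/ffunP => q; rewrite Wm take0.
right; apply/forallP => q; apply/implyP => /eqP qk; rewrite Wm.
by rewrite /coords_first -qk filter_enum_val /= inE eqxx.
Qed.

Lemma mem_wpath_last X Y k W : k < n ->
  W \in wpath X Y (coords_last k) -> W = Y \/ agree_at k W X.
Proof.
move=> lt_k /mem_wpath[m Wm].
set ps := [seq q <- enum 'I_n | val q != k]; have [le_m|lt_m] := leqP m (size ps).
  right; apply/forallP => q; apply/implyP => /eqP qk; rewrite Wm takel_cat //.
  have qNps : q \notin ps by rewrite mem_filter qk eqxx.
  by rewrite (negbTE (contra (@mem_take m _ ps q) qNps)).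
have size_last : size (coords_last k) = (size ps).+1.
  by rewrite /coords_last size_cat -/ps (_ : k = val (Ordinal lt_k)) // filter_enum_val addn1.
by left; apply/ffunP => q; rewrite Wm take_oversize ?size_last ?mem_coords_last.
Qed.

Lemma enum_ord_full q : q \in enum 'I_n.
Proof. by rewrite mem_enum. Qed.

Lemma mem_take_enum q m : (q \in take m (enum 'I_n)) = (q < m).
Proof.
rewrite -(mem_map val_inj) map_take val_enum_ord take_iota mem_iota /= add0n.
by rewrite leq_min ltn_ord andbT.
Qed.

Lemma nbr_wpath_tail X Y i q : i./2 < n -> nbr Y i \in wpath X Y (enum 'I_n) ->
  i./2 <= q -> nbr Y i q = X q.
Proof.
move=> lt_i /mem_wpath[m Wm] le_iq; rewrite Wm mem_take_enum ltnNge.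
suff -> : m <= q by [].
apply: leq_trans le_iq; rewrite leqNgt; apply/negP => lt_im.
have := Wm (Ordinal lt_i); rewrite mem_take_enum lt_im nbr_at //.
by apply/eqP; apply: shift_neq.
Qed.

Lemma nbr_wpath_uniq X Y i j : i./2 < n -> j./2 < n ->
  nbr Y i \in wpath X Y (enum 'I_n) -> nbr Y j \in wpath X Y (enum 'I_n) -> i = j.
Proof.
wlog le_ij : i j / i./2 <= j./2.
  move=> gen lt_i lt_j Yi Yj; have [le|le] := leqP i./2 j./2; first exact: gen.
  by apply/esym/gen => //; apply: ltnW.
move=> lt_i lt_j Yi Yj; set qj := Ordinal lt_j.
have tail_i := nbr_wpath_tail (q := qj) lt_i Yi le_ij.
have tail_j := nbr_wpath_tail (q := qj) lt_j Yj (leqnn _).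
have [eq_ij|neq_ij] := eqVneq i./2 j./2.
  apply: (@nbr_agree_inj Y i j lt_j); apply/forallP => q; apply/implyP => /eqP qj_eq.
  have -> : q = qj by apply: val_inj.
  by rewrite tail_i tail_j.
move: tail_i; rewrite nbr_off 1?eq_sym // -tail_j nbr_at // => /esym/eqP.
by rewrite (negbTE (shift_neq _ _)).
Qed.

End Words.

Arguments coords_first {n} k.
Arguments coords_last {n} k.

Lemma diff1_sym n (W W' : word n) : diff1 W W' = diff1 W' W.
Proof. by rewrite /diff1; congr (_ == 1); apply: eq_card => q; rewrite !inE eq_sym. Qed.

Definition d0 : 'I_3 := Ordinal (isT : 0 < 3).
Definition d1 : 'I_3 := Ordinal (isT : 1 < 3).
Definition d2 : 'I_3 := Ordinal (isT : 2 < 3).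

Lemma ord3P (d : 'I_3) : [\/ d = d0, d = d1 | d = d2].
Proof.
by case: d => [[|[|[|m]]] lt_d] //; [constructor 1|constructor 2|constructor 3]; apply: val_inj.
Qed.

Section Graph.
Variables r s t : nat.
Local Notation adjR := (refl_closure (@e3c_adj r s t)).

Lemma e3c_adj_sym : symmetric (@e3c_adj r s t).
Proof.
move=> x y; rewrite /e3c_adj eq_sym (eq_sym (vA x)) (eq_sym (vB x)) (eq_sym (vC x)).
rewrite (eq_sym (vd x)) (diff1_sym (vA x)) (diff1_sym (vB x)) (diff1_sym (vC x)).
by rewrite !(andbCA (vd y == _ :> nat)).
Qed.

Lemma adjR_layer A B C d d' : adjR (A, B, C, d) (A, B, C, d').
Proof.
have [->|neq_d] := eqVneq d d'; first by rewrite /refl_closure eqxx.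
by rewrite /refl_closure /e3c_adj /vA /vB /vC /vd /= !eqxx neq_d /= andbT orbN.
Qed.

Lemma adjR_A B C :
  {homo (fun W => (W, B, C, d2) : vtx r s t) : W W' / wstep W W' >-> adjR W W'}.
Proof.
move=> W W' stepW; rewrite /refl_closure; have [->|neqW] := eqVneq W W'; first by rewrite eqxx.
by rewrite /e3c_adj /vA /vB /vC /vd /= !eqxx (wstep_diff1 stepW neqW) !orbT andbT orbN.
Qed.

Lemma adjR_B A C :
  {homo (fun W => (A, W, C, d1) : vtx r s t) : W W' / wstep W W' >-> adjR W W'}.
Proof.
move=> W W' stepW; rewrite /refl_closure; have [->|neqW] := eqVneq W W'; first by rewrite eqxx.
by rewrite /e3c_adj /vA /vB /vC /vd /= !eqxx (wstep_diff1 stepW neqW) !orbT andbT orbN.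
Qed.

Lemma adjR_C A B :
  {homo (fun W => (A, B, W, d0) : vtx r s t) : W W' / wstep W W' >-> adjR W W'}.
Proof.
move=> W W' stepW; rewrite /refl_closure; have [->|neqW] := eqVneq W W'; first by rewrite eqxx.
by rewrite /e3c_adj /vA /vB /vC /vd /= !eqxx (wstep_diff1 stepW neqW) !orbT andbT orbN.
Qed.

Definition walkAB (psA : seq 'I_r) (psB : seq 'I_s) A A' B B' C : seq (vtx r s t) :=
  [seq (W, B, C, d2) | W <- wpath A A' psA] ++ [seq (A', W, C, d1) | W <- wpath B B' psB].

Definition walkBA A A' B B' C : seq (vtx r s t) :=
  [seq (A, W, C, d1) | W <- wpath B B' (enum 'I_s)] ++
  [seq (W, B', C, d2) | W <- wpath A A' (enum 'I_r)].

Section WalkAB.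
Variables (psA : seq 'I_r) (psB : seq 'I_s).
Hypotheses (psA_full : forall q, q \in psA) (psB_full : forall q, q \in psB).

Lemma walkAB_walk A A' B B' C x : adjR x (A, B, C, d2) ->
  path adjR x (walkAB psA psB A A' B B' C) /\
  last x (walkAB psA psB A A' B B' C) = (A', B', C, d1).
Proof.
move=> xAB; rewrite cat_path last_cat !last_map_wpath //; split=> //.
apply/andP; split; apply: path_map_wpath; rewrite ?adjR_layer //.
- exact: adjR_A.
- exact: adjR_B.
Qed.

Lemma size_walkAB A A' B B' C :
  size (walkAB psA psB A A' B B' C) = size psA + size psB + 2.
Proof. by rewrite size_cat !size_map !size_wpath addnS addSn addn2. Qed.

End WalkAB.

Lemma mem_walkAB psA psB A A' B B' C x : x \in walkAB psA psB A A' B B' C ->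
  vC x = C /\ (vd x = d2 /\ vB x = B /\ vA x \in wpath A A' psA
               \/ vd x = d1 /\ vA x = A' /\ vB x \in wpath B B' psB).
Proof. by rewrite mem_cat => /orP[] /mapP[W W_in ->]; split => //; [left | right]. Qed.

Lemma walkBA_walk A A' B B' C x : adjR x (A, B, C, d1) ->
  path adjR x (walkBA A A' B B' C) /\ last x (walkBA A A' B B' C) = (A', B', C, d2).
Proof.
move=> xAB; rewrite cat_path last_cat !last_map_wpath; try exact: enum_ord_full.
split=> //.
apply/andP; split; apply: path_map_wpath; rewrite ?adjR_layer //.
- exact: adjR_B.
- exact: adjR_A.
Qed.

Lemma size_walkBA A A' B B' C : size (walkBA A A' B B' C) = r + s + 2.
Proof. by rewrite size_cat !size_map !size_wpath !size_enum_ord addnS addSn addn2 addnC. Qed.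

Lemma mem_walkBA A A' B B' C x : x \in walkBA A A' B B' C ->
  vC x = C /\ (vd x = d1 /\ vA x = A
               \/ vd x = d2 /\ vB x = B' /\ vA x \in wpath A A' (enum 'I_r)).
Proof. by rewrite mem_cat => /orP[] /mapP[W W_in ->]; split => //; [left | right]. Qed.

End Graph.

(* Keeps [simpl] from unfolding the two straight walks; they are only used
   through the lemmas above. *)
Opaque walkAB walkBA.

Definition swap12 (d : 'I_3) : 'I_3 := if d == d1 then d2 else if d == d2 then d1 else d.

Definition swapAB r s t (x : vtx s r t) : vtx r s t := (vB x, vA x, vC x, swap12 (vd x)).

Lemma swapABK r s t : cancel (@swapAB r s t) (@swapAB s r t).
Proof. by case=> [[[A B] C] d]; case: (ord3P d) => ->. Qed.

Lemma swapAB_adj r s t :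
  {homo @swapAB r s t : x y / e3c_adj x y >-> e3c_adj x y}.
Proof.
move=> [[[A B] C] d] [[[A' B'] C'] d'].
rewrite /e3c_adj /swapAB /vA /vB /vC /vd /= !xpair_eqE.
case: (ord3P d) (ord3P d') => -> [] -> /=;
  by case: (A == A'); case: (B == B'); case: (C == C'); case: (diff1 A A'); case: (diff1 B B').
Qed.

Section Layers02.
Variables (r s t m : nat) (A A' : word r) (B B' : word s) (C : word t).
Hypotheses (le_mr : m <= r) (le_mt : m <= t) (neqA : A != A') (neqB : B != B').
Local Notation adjR := (refl_closure (@e3c_adj r s t)).
Local Notation u := ((A, B, C, d0) : vtx r s t).
Local Notation v := ((A', B', C, d2) : vtx r s t).

(* Detour i reaches v through (landA i, B', C, d2).  When nbr A' i lies on the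
   A-part of [walkBA], that vertex would be shared, so the detour heads for A'
   directly; by [nbr_wpath_uniq] this happens for at most one i. *)
Definition landA i := if nbr A' i \in wpath A A' (enum 'I_r) then A' else nbr A' i.

Lemma wstep_landA i : wstep (landA i) A'.
Proof.
rewrite /landA; case: ifP => _; first exact: (wstep_at (k := 0)).
by rewrite wstep_sym wstep_nbr.
Qed.

Lemma landA_off i :
  landA i != A' -> landA i = nbr A' i /\ nbr A' i \notin wpath A A' (enum 'I_r).
Proof. by rewrite /landA; case: ifP => [_|/negbT]; rewrite ?eqxx. Qed.

Lemma uniq_landA : uniq (mkseq landA (2 * m)).
Proof.
apply/mkseq_uniqP => i j lt_i lt_j; rewrite /landA.
have lt_ir : i./2 < r by apply: leq_trans (half_lt_double lt_i) le_mr.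
have lt_jr : j./2 < r by apply: leq_trans (half_lt_double lt_j) le_mr.
case: ifP => Ai; case: ifP => Aj.
- by move=> _; apply: (nbr_wpath_uniq lt_ir lt_jr Ai Aj).
- by move=> eqA; have := nbr_neq A' lt_jr; rewrite -eqA eqxx.
- by move=> eqA; have := nbr_neq A' lt_ir; rewrite eqA eqxx.
- exact: nbr_inj.
Qed.

Definition detourC i : seq (vtx r s t) :=
  (A, B, nbr C i, d0) :: walkAB (enum 'I_r) (enum 'I_s) A (landA i) B B' (nbr C i) ++
  [:: (landA i, B', nbr C i, d0); (landA i, B', C, d0); (landA i, B', C, d2); v].

Definition walk02 i : seq (vtx r s t) :=
  if i < 2 * m then detourC i
  else if i == 2 * m then walkAB (enum 'I_r) (enum 'I_s) A A' B B' C ++ [:: v]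
  else walkBA A A' B B' C.

Lemma detourC_walk i : path adjR u (detourC i) /\ last u (detourC i) = v.
Proof.
have [pathAB lastAB] := walkAB_walk (@enum_ord_full r) (@enum_ord_full s) (landA i) B'
  (adjR_layer A B (nbr C i) d0 d2).
rewrite /detourC /= cat_path last_cat pathAB lastAB /=; split=> //.
have stepC : wstep (nbr C i) C by rewrite wstep_sym wstep_nbr.
by rewrite (adjR_C _ _ (wstep_nbr _ _)) (adjR_C _ _ stepC) (adjR_A _ _ (wstep_landA _)) !adjR_layer.
Qed.

Lemma walk02_walk i : path adjR u (walk02 i) /\ last u (walk02 i) = v.
Proof.
rewrite /walk02; case: ifP => _; first exact: detourC_walk.
case: ifP => _; last exact: walkBA_walk (adjR_layer A B C d0 d1).
have [pathAB lastAB] := walkAB_walk (@enum_ord_full r) (@enum_ord_full s) A' B'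
  (adjR_layer A B C d0 d2).
by rewrite cat_path last_cat pathAB lastAB /= adjR_layer.
Qed.

Lemma size_walk02 i : size (walk02 i) <= r + s + 7.
Proof.
rewrite /walk02; case: ifP => _; last case: ifP => _.
- by rewrite /detourC /= size_cat size_walkAB !size_enum_ord /=; lia.
- by rewrite size_cat size_walkAB !size_enum_ord /=; lia.
- by rewrite size_walkBA; lia.
Qed.

Definition label02 (x : vtx r s t) : nat :=
  if vC x != C then index (vC x) (mkseq (nbr C) (2 * m))
  else if vd x == d0 then index (vA x) (mkseq landA (2 * m))
  else if vd x == d1 then (if vA x == A' then 2 * m else (2 * m).+1)
  else if vB x == B then 2 * m
  else if vA x \in wpath A A' (enum 'I_r) then (2 * m).+1
  else index (vA x) (mkseq (nbr A') (2 * m)).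

Lemma label02_nbrC i x : i < 2 * m -> vC x = nbr C i -> label02 x = i.
Proof.
move=> lt_i Cx; have lt_it : i./2 < t by apply: leq_trans (half_lt_double lt_i) le_mt.
by rewrite /label02 Cx nbr_neq // index_mkseq // uniq_nbrs // leq_mul2l le_mt orbT.
Qed.

Lemma label02_detourC i x : i < 2 * m -> x \in detourC i -> x != v -> label02 x = i.
Proof.
move=> lt_i; rewrite /detourC inE mem_cat => /or3P[/eqP-> _|/mem_walkAB[Cx _] _|].
- exact: label02_nbrC.
- exact: label02_nbrC.
rewrite !inE => /or4P[] /eqP-> xNv.
- exact: label02_nbrC.
- by rewrite /label02 /vA /vC /vd /= eqxx index_mkseq // uniq_landA.
- have /landA_off[-> Aoff] : landA i != A' by apply: contraNneq xNv => ->.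
  rewrite /label02 /vA /vB /vC /vd /= eqxx (negbTE Aoff) eq_sym (negbTE neqB).
  by rewrite index_mkseq // uniq_nbrs // leq_mul2l le_mr orbT.
- by rewrite eqxx in xNv.
Qed.

Lemma label02_walk i x : i < 2 * m + 2 ->
  x \in walk02 i -> x != u -> x != v -> label02 x = i.
Proof.
rewrite /walk02 => lt_i; case: ifP => [lt_im x_in _|ge_im]; first exact: label02_detourC.
case: ifP => [/eqP-> | neq_im].
  rewrite mem_cat mem_seq1 => /orP[/mem_walkAB[Cx [[dx [Bx _]]|[dx [Ax _]]]] _ _|/eqP-> _].
  - by rewrite /label02 Cx dx Bx !eqxx.
  - by rewrite /label02 Cx dx Ax !eqxx.
  - by rewrite eqxx.
have -> : i = (2 * m).+1 by lia.
move=> /mem_walkBA[Cx [[dx Ax]|[dx [Bx Ax]]]] _ _.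
- by rewrite /label02 Cx dx Ax eqxx /= (negbTE neqA).
- by rewrite /label02 Cx dx Bx Ax eqxx /= eq_sym (negbTE neqB).
Qed.

Lemma disjoint_paths02 : disjoint_paths (@e3c_adj r s t) u v (2 * m + 2) (r + s + 7).
Proof.
apply: (disjoint_paths_of_walks (W := walk02) (lab := label02)) => i lt_i.
- exact: walk02_walk.
- exact: size_walk02.
- exact: label02_walk.
Qed.

End Layers02.

Section Layers12.
Variables (r s t : nat) (A A' : word r) (B B' : word s) (C : word t).
Hypotheses (le_rs : r <= s) (t_gt0 : 0 < t) (neqA : A != A') (neqB : B != B').
Local Notation adjR := (refl_closure (@e3c_adj r s t)).
Local Notation u := ((A, B, C, d1) : vtx r s t).
Local Notation v := ((A', B', C, d2) : vtx r s t).

Lemma half_lt_s i : i < 2 * r -> i./2 < s.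
Proof. by move/half_lt_double/leq_trans; apply. Qed.

Lemma uniq_nbrB : uniq (mkseq (nbr B) (2 * r)).
Proof. by rewrite uniq_nbrs // leq_mul2l le_rs orbT. Qed.

(* If nbr B i = B', detour i passes through (A, B', C, d2), and so does every
   detour j with nbr A' (perm12 j) = A; [perm12] makes sure that j = i. *)
Definition idxB := index B' (mkseq (nbr B) (2 * r)).
Definition idxA := index A (mkseq (nbr A') (2 * r)).

Definition perm12 : nat -> nat :=
  if (idxB < 2 * r) && (idxA < 2 * r) then nswap idxB idxA else id.

Lemma perm12_lt i : i < 2 * r -> perm12 i < 2 * r.
Proof. by rewrite /perm12; case: ifP => // /andP[? ?]; apply: nswap_lt. Qed.

Lemma perm12_inj : injective perm12.
Proof. by rewrite /perm12; case: ifP => _ //; apply: can_inj (nswapK _ _). Qed.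

Lemma perm12_key i j : i < 2 * r -> j < 2 * r ->
  nbr B i = B' -> nbr A' (perm12 j) = A -> i = j.
Proof.
move=> lt_i lt_j Bi Aj; apply: perm12_inj.
have idxBi : idxB = i by rewrite /idxB -Bi index_mkseq ?uniq_nbrB.
have idxAj : idxA = perm12 j by rewrite /idxA -Aj index_mkseq ?uniq_nbrs ?perm12_lt.
by rewrite {1}/perm12 idxBi idxAj lt_i perm12_lt //= /nswap eqxx.
Qed.

Definition turnA i := nbr A' (perm12 i).

Lemma uniq_turnA : uniq (mkseq turnA (2 * r)).
Proof.
apply/mkseq_uniqP => i j lt_i lt_j /nbr_inj eqp; apply: perm12_inj; apply: eqp.
exact/half_lt_double/perm12_lt.
Qed.

(* Changing coordinate (perm12 i)./2 of A first and coordinate i./2 of B last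
   keeps i recoverable from every internal vertex (see [label12]). *)
Definition detourB i : seq (vtx r s t) :=
  (A, nbr B i, C, d1) ::
  walkAB (coords_first (perm12 i)./2) (coords_last i./2) A (turnA i) (nbr B i) B' C ++
  [:: (turnA i, B', C, d2); v].

Definition detourC0 : seq (vtx r s t) :=
  [:: (A, B, C, d0); (A, B, nbr C 0, d0)] ++ walkBA A A' B B' (nbr C 0) ++
  [:: (A', B', nbr C 0, d0); (A', B', C, d0); v].

Definition walk12 i : seq (vtx r s t) :=
  if i < 2 * r then detourB i
  else if i == 2 * r then walkAB (enum 'I_r) (enum 'I_s) A A' B B' C ++ [:: v]
  else detourC0.

Lemma walk12_walk i : path adjR u (walk12 i) /\ last u (walk12 i) = v.
Proof.
rewrite /walk12; case: ifP => _; last case: ifP => _.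
- have [pathAB lastAB] := walkAB_walk (@mem_coords_first r (perm12 i)./2) (@mem_coords_last s i./2)
    (turnA i) B' (adjR_layer A (nbr B i) C d1 d2).
  rewrite /detourB /= cat_path last_cat pathAB lastAB /=; split=> //.
  have stepA : wstep (turnA i) A' by rewrite wstep_sym wstep_nbr.
  by rewrite (adjR_B _ _ (wstep_nbr _ _)) (adjR_A _ _ stepA) !adjR_layer.
- have [pathAB lastAB] := walkAB_walk (@enum_ord_full r) (@enum_ord_full s) A' B'
    (adjR_layer A B C d1 d2).
  by rewrite cat_path last_cat pathAB lastAB /= adjR_layer.
- have [pathBA lastBA] := walkBA_walk A' B' (adjR_layer A B (nbr C 0) d0 d1).
  rewrite /detourC0 cat_path last_cat /= cat_path last_cat pathBA lastBA /=; split=> //.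
  have stepC : wstep (nbr C 0) C by rewrite wstep_sym wstep_nbr.
  by rewrite (adjR_C _ _ (wstep_nbr _ _)) (adjR_C _ _ stepC) !adjR_layer.
Qed.

Lemma size_walk12 i : size (walk12 i) <= r + s + 7.
Proof.
rewrite /walk12; case: ifP => _; last case: ifP => _.
- by rewrite /detourB /= size_cat size_walkAB size_coords_first size_coords_last /=; lia.
- by rewrite size_cat size_walkAB !size_enum_ord /=; lia.
- by rewrite /detourC0 size_cat /= size_cat size_walkBA /=; lia.
Qed.

Definition label12 (x : vtx r s t) : nat :=
  let k := index (vA x) (mkseq turnA (2 * r)) in
  if (vC x != C) || (vd x == d0) then (2 * r).+1
  else if vd x == d1 then
    if vA x == A' then 2 * r
    else if (k < 2 * r) && ((vB x == B') || agree_at k./2 (vB x) (nbr B k)) then k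
    else index (vB x) (mkseq (nbr B) (2 * r))
  else if vB x == B then 2 * r
  else if (k < 2 * r) && (vB x == B') then k
  else index (vB x) (mkseq (nbr B) (2 * r)).

Lemma label12_first i : i < 2 * r -> label12 (A, nbr B i, C, d1) = i.
Proof.
move=> lt_i; rewrite /label12 /vA /vB /vC /vd /= eqxx (negbTE neqA).
set k := index A _; case: ifP => [/andP[lt_k agr] | _]; last by rewrite index_mkseq // uniq_nbrB.
have turnk : turnA k = A by apply: mkseq_index.
case/orP: agr => [/eqP Bi | agr]; first exact/esym/(perm12_key lt_i lt_k Bi turnk).
exact/esym/(nbr_agree_inj (half_lt_s lt_k) agr).
Qed.

Lemma label12_d1 i x : i < 2 * r -> vC x = C -> vd x = d1 -> vA x = turnA i ->
  (vB x == B') || agree_at i./2 (vB x) (nbr B i) -> label12 x = i.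
Proof.
move=> lt_i Cx dx Ax Bx; have lt_pi : (perm12 i)./2 < r by apply/half_lt_double/perm12_lt.
by rewrite /label12 Cx dx Ax !eqxx /= (negbTE (nbr_neq _ lt_pi)) index_mkseq ?uniq_turnA ?lt_i ?Bx.
Qed.

Lemma label12_d2 i x : i < 2 * r -> vC x = C -> vd x = d2 -> vB x = nbr B i ->
  vA x \in wpath A (turnA i) (coords_first (perm12 i)./2) -> label12 x = i.
Proof.
move=> lt_i Cx dx Bx Ax; have lt_pi : (perm12 i)./2 < r by apply/half_lt_double/perm12_lt.
rewrite /label12 Cx dx Bx eqxx /= (negbTE (nbr_neq _ (half_lt_s lt_i))).
set k := index (vA x) _; case: ifP => [/andP[lt_k /eqP Bi] | _]; last first.
  by rewrite index_mkseq // uniq_nbrB.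
have turnk : turnA k = vA x by apply: mkseq_index.
case: (mem_wpath_first lt_pi Ax) => [Ax_eq|agr].
  by rewrite (perm12_key lt_i lt_k Bi) // -Ax_eq -turnk.
by apply/perm12_inj/(@nbr_agree_inj _ A' _ _ lt_pi); rewrite -/(turnA k) -/(turnA i) turnk.
Qed.

Lemma label12_last i : i < 2 * r -> label12 (turnA i, B', C, d2) = i.
Proof.
move=> lt_i; rewrite /label12 /vA /vB /vC /vd /= !eqxx (eq_sym B') (negbTE neqB).
by rewrite index_mkseq ?uniq_turnA // lt_i.
Qed.

Lemma label12_walk i x : i < 2 * r + 2 ->
  x \in walk12 i -> x != u -> x != v -> label12 x = i.
Proof.
rewrite /walk12 => lt_i; case: ifP => [lt_ir | ge_ir].
  rewrite /detourB inE mem_cat.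
  case/or3P=> [/eqP-> _ _ | /mem_walkAB[Cx [[dx [Bx Ax]]|[dx [Ax Bx]]]] _ _ |].
  - exact: label12_first.
  - exact: label12_d2.
  - apply: label12_d1 => //.
    by case: (mem_wpath_last (half_lt_s lt_ir) Bx) => [->|->]; rewrite ?eqxx ?orbT.
  - rewrite !inE => /orP[/eqP-> _ _|/eqP-> _]; [exact: label12_last | by rewrite eqxx].
case: ifP => [/eqP-> | neq_ir].
  rewrite mem_cat mem_seq1 => /orP[/mem_walkAB[Cx [[dx [Bx _]]|[dx [Ax _]]]] _ _|/eqP-> _].
  - by rewrite /label12 Cx dx Bx !eqxx.
  - by rewrite /label12 Cx dx Ax !eqxx.
  - by rewrite eqxx.
have -> : i = (2 * r).+1 by lia.
have C0 : nbr C 0 != C by apply: nbr_neq.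
move=> x_in _ xNv; rewrite /label12; suff -> : (vC x != C) || (vd x == d0) by [].
move: x_in xNv; rewrite /detourC0 mem_cat => /orP[].
  by rewrite !inE => /orP[] /eqP-> _; rewrite /vC /vd /= eqxx orbT.
rewrite mem_cat => /orP[/mem_walkBA[-> _] _|]; first by rewrite C0.
by rewrite !inE => /or3P[] /eqP->; rewrite /vC /vd /= ?C0 ?eqxx ?orbT.
Qed.

Lemma disjoint_paths12 : disjoint_paths (@e3c_adj r s t) u v (2 * r + 2) (r + s + 7).
Proof.
apply: (disjoint_paths_of_walks (W := walk12) (lab := label12)) => i lt_i.
- exact: walk12_walk.
- exact: size_walk12.
- exact: label12_walk.
Qed.

End Layers12.

Lemma disjoint_paths01 r s t (A A' : word r) (B B' : word s) (C : word t) :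
  r <= s -> r <= t -> A != A' -> B != B' ->
  disjoint_paths (@e3c_adj r s t) (A, B, C, d0) (A', B', C, d1) (2 * r + 2) (r + s + 7).
Proof.
move=> le_rs le_rt neqA neqB; rewrite (addnC r s).
exact: disjoint_paths_map (can_inj (@swapABK r s t)) (@swapAB_adj r s t)
  (disjoint_paths02 C le_rs le_rt neqB neqA).
Qed.

Theorem lemma20 (r s t : nat) (u v : vtx r s t) :
  1 <= r -> r <= s -> s <= t ->
  vA u != vA v -> vB u != vB v -> vC u = vC v -> vd u != vd v ->
  exists P : 'I_(2 * r + 2) -> seq (vtx r s t),
    (forall i, is_path (@e3c_adj r s t) u v (P i)) /\
    (forall i, path_len (P i) <= r + s + 7) /\
    (forall i j, i != j -> int_disjoint u v (P i) (P j)).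
Proof.
move=> r_gt0 le_rs le_st; have le_rt := leq_trans le_rs le_st.
case: u v => [[[A B] C] d] [[[A' B'] C'] d']; rewrite /vA /vB /vC /vd /= => neqA neqB <- neq_d.
have neqA' : A' != A by rewrite eq_sym.
have neqB' : B' != B by rewrite eq_sym.
have t_gt0 : 0 < t := leq_trans r_gt0 le_rt.
have rev := disjoint_paths_rev (@e3c_adj_sym r s t).
case: (ord3P d) (ord3P d') neq_d => -> [] -> // _.
- exact: disjoint_paths01.
- exact: disjoint_paths02.
- exact/rev/disjoint_paths01.
- exact: disjoint_paths12.
- exact/rev/disjoint_paths02.
- exact/rev/disjoint_paths12.
Qed.
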